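(* Let $H$ be a finite-dimensional real Hilbert space, $A\in B(H,H)$ symmetric with $\|A^{1/2}\mathbf{u}\|^2\ge\ell_0\|\mathbf{u}\|^2$ for all $\mathbf{u}$ ($\ell_0>0$), $\mathbf{N}:H\to H$ locally Lipschitz with $\mathbf{N}(\mathbf{u})\cdot\mathbf{u}=0$ for all $\mathbf{u}$, $\mathbf{F}\in H$ constant, and $\gamma>0$. For $k\in(0,1]$ let $\mathbb{S}_k$ be the map on $(H\times H)\times\mathbb{R}^2$ given by $\mathbb{S}_k((\mathbf{u}_0,\mathbf{u}_1),(q_0,q_1))=((\mathbf{u}_1,\mathbf{u}_2),(q_1,q_2))$, where $(\mathbf{u}_2,q_2)$ is the unique solution of $$\frac{3\mathbf{u}_2-4\mathbf{u}_1+\mathbf{u}_0}{2k}+A\mathbf{u}_2+q_2\mathbf{N}(2\mathbf{u}_1-\mathbf{u}_0)=\mathbf{F},\qquad \frac{3q_2-4q_1+q_0}{2k}+\gamma q_2-\mathbf{N}(2\mathbf{u}_1-\mathbf{u}_0)\cdot\mathbf{u}_2=\gamma,$$ and let $\mathscr{A}_k$ be the global attractor of the discrete dynamical system generated by $\mathbb{S}_k$. Then there exists a constant $C>0$ independent of $k$ such that $$\|\mathbf{u}_1-\mathbf{u}_2\|+|q_1-q_2|\le Ck\qquad\text{for all }((\mathbf{u}_1,\mathbf{u}_2),(q_1,q_2))\in\mathscr{A}_k\text{ and all }k.$$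
   Context: A global attractor of a discrete dynamical system is a compact invariant set attracting all bounded sets; $\mathbb{S}_k$ possesses one under the stated assumptions. *)

From HB Require Import structures.
From Stdlib Require Import ClassicalEpsilon.
From mathcomp Require Import all_boot all_order all_algebra.
From mathcomp Require Import all_classical all_reals all_analysis.
Set Implicit Arguments. Unset Strict Implicit. Unset Printing Implicit Defensive.
Import Order.TTheory GRing.Theory Num.Theory.
Import numFieldNormedType.Exports.
Local Open Scope ring_scope.

(* The finite-dimensional real Hilbert space H is modelled as R^n = 'rV[R]_n
   with the Euclidean inner product. *)
Definition dot {R : realType} {n : nat} (u v : 'rV[R]_n) : R := (u *m v^T) 0 0.
Definition hnorm {R : realType} {n : nat} (u : 'rV[R]_n) : R := Num.sqrt (dot u u).

Definition app {R : realType} {n : nat} (A : 'M[R]_n) (u : 'rV[R]_n) : 'rV[R]_n :=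
  u *m A^T.

Definition locally_lipschitz {R : realType} {n : nat} (N : 'rV[R]_n -> 'rV[R]_n) :=
  forall r : R, exists L : R, forall u v : 'rV[R]_n,
    hnorm u <= r -> hnorm v <= r -> hnorm (N u - N v) <= L * hnorm (u - v).

Notation state R n := (('rV[R]_n * 'rV[R]_n) * (R * R))%type.

Definition scheme_eq {R : realType} {n : nat} (A : 'M[R]_n)
  (N : 'rV[R]_n -> 'rV[R]_n) (F : 'rV[R]_n) (gamma k : R)
  (u0 u1 : 'rV[R]_n) (q0 q1 : R) (u2 : 'rV[R]_n) (q2 : R) : Prop :=
  let w := 2%:R *: u1 - u0 in
  (2%:R * k)^-1 *: (3%:R *: u2 - 4%:R *: u1 + u0) + app A u2 + q2 *: N w = F /\
  (3%:R * q2 - 4%:R * q1 + q0) / (2%:R * k) + gamma * q2 - dot (N w) u2 = gamma.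

Definition scheme_sol {R : realType} {n : nat} (A : 'M[R]_n)
  (N : 'rV[R]_n -> 'rV[R]_n) (F : 'rV[R]_n) (gamma k : R)
  (u0 u1 : 'rV[R]_n) (q0 q1 : R) : ('rV[R]_n * R)%type :=
  epsilon (inhabits (0, 0))
    (fun p : 'rV[R]_n * R => scheme_eq A N F gamma k u0 u1 q0 q1 p.1 p.2).

Definition Sk {R : realType} {n : nat} (A : 'M[R]_n)
  (N : 'rV[R]_n -> 'rV[R]_n) (F : 'rV[R]_n) (gamma k : R)
  (x : state R n) : state R n :=
  let u0 := x.1.1 in let u1 := x.1.2 in let q0 := x.2.1 in let q1 := x.2.2 in
  let p := scheme_sol A N F gamma k u0 u1 q0 q1 in
  ((u1, p.1), (q1, p.2)).

Definition snorm {R : realType} {n : nat} (x : state R n) : R :=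
  hnorm x.1.1 + hnorm x.1.2 + `|x.2.1| + `|x.2.2|.

Definition sdist {R : realType} {n : nat} (x y : state R n) : R :=
  hnorm (x.1.1 - y.1.1) + hnorm (x.1.2 - y.1.2)
  + `|x.2.1 - y.2.1| + `|x.2.2 - y.2.2|.

Definition sbounded {R : realType} {n : nat} (B : set (state R n)) : Prop :=
  exists M : R, forall x, B x -> snorm x <= M.

(* global attractor of the discrete dynamical system generated by S :
   a compact invariant set attracting all bounded sets (the Hausdorff
   semidistance dist(S^m B, Att) tends to 0 for every bounded B). *)
Definition global_attractor {R : realType} {n : nat}
  (S : state R n -> state R n) (Att : set (state R n)) : Prop :=
  compact Att /\
  (S @` Att = Att)%classic /\
  forall B : set (state R n), sbounded B ->
    forall eps : R, 0 < eps -> exists m0 : nat, forall m : nat, (m0 <= m)%N ->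
      forall x, B x -> exists2 a, Att a & sdist (iter m S x) a < eps.

(* Testing the first equation of the scheme with 4k u2 and the second with 4k q2, the
   N-terms cancel, and the BDF2 identity
     2 (3a - 4b + c)·a = |a|² + |2a - b|² - |b|² - |2b - c|² + |a - 2b + c|²
   yields a discrete Lyapunov inequality V(S x) (1 + kθ) <= V(x) + kK with
   μ = min(l0, γ), θ = μ/(9 + μ) and K independent of k.  As S maps the attractor onto
   itself, V <= K/θ on it, so all the attractors lie in one ball.  On that ball the
   forcing terms in (w = 2 u1 - u0)
     3 (u2 - u1) = (u1 - u0) + 2k (F - A u2 - q2 N(w)),
     3 (q2 - q1) = (q1 - q0) + 2k (γ - γ q2 + N(w)·u2)
   are bounded by some G, so the increment d of a state satisfies
   3 d(S x) <= d(x) + 2kG, and the same surjectivity argument gives d <= kG.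
   Increments are measured with the max-entry norm `|.|` of matrices, which unlike hnorm
   comes with the triangle inequality; hnorm <= sqrt n `|.|` converts back at the end. *)

From Stdlib Require Import ClassicalEpsilon.
From mathcomp Require Import all_boot all_order all_algebra.
From mathcomp Require Import all_classical all_reals all_analysis.
From mathcomp Require Import ring lra.
Import Order.TTheory GRing.Theory Num.Theory.
Import numFieldNormedType.Exports.
Local Open Scope ring_scope.

Lemma invariant_dissipation_bound {R : realType} {T : Type} (S : T -> T)
    (Att : set T) (V : T -> R) (a b : R) :
  0 < a -> (exists M, forall x, Att x -> V x <= M) ->
  (Att `<=` S @` Att)%classic ->
  (forall x, Att x -> V (S x) * (1 + a) <= V x + b) ->
  forall x, Att x -> V x <= b / a.
Proof.
move=> a_gt0 [M VM] Att_sub dissip x Attx.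
set E := [set V y | y in Att]%classic.
have E_ub : has_ubound E by exists M => _ [y Atty <-]; exact: VM.
have le_supE : forall y, Att y -> V y <= sup E.
  by move=> y Atty; apply: ub_le_sup => //; exists y.
have supE_dissip : sup E * (1 + a) <= sup E + b.
  rewrite -ler_pdivlMr; last lra.
  apply: ge_sup; first by exists (V x), x.
  move=> _ [z /Att_sub [y Atty <-] <-]; rewrite ler_pdivlMr; last lra.
  by apply: le_trans (dissip y Atty) _; rewrite lerD2r le_supE.
have := ler_wpM2r (ltW a_gt0) (le_supE x Attx).
rewrite ler_pdivlMr //; lra.
Qed.

Section InnerProduct.
Context {R : realType} {n : nat}.
Implicit Types (u v w : 'rV[R]_n).

Lemma dotE u v : dot u v = \sum_j u 0 j * v 0 j.
Proof. by rewrite /dot mxE; apply: eq_bigr => j _; rewrite mxE. Qed.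

Lemma dotC u v : dot u v = dot v u.
Proof. by rewrite !dotE; apply: eq_bigr => j _; rewrite mulrC. Qed.

Lemma dotDl u v w : dot (u + v) w = dot u w + dot v w.
Proof. by rewrite !dotE -big_split; apply: eq_bigr => j _; rewrite mxE mulrDl. Qed.

Lemma dotZl (a : R) u w : dot (a *: u) w = a * dot u w.
Proof. by rewrite !dotE mulr_sumr; apply: eq_bigr => j _; rewrite mxE mulrA. Qed.

Lemma dotNl u w : dot (- u) w = - dot u w.
Proof. by rewrite -scaleN1r dotZl mulN1r. Qed.

Lemma dotBl u v w : dot (u - v) w = dot u w - dot v w.
Proof. by rewrite dotDl dotNl. Qed.

Lemma dotDr u v w : dot w (u + v) = dot w u + dot w v.
Proof. by rewrite dotC dotDl !(dotC w). Qed.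

Lemma dotZr (a : R) u w : dot w (a *: u) = a * dot w u.
Proof. by rewrite dotC dotZl dotC. Qed.

Lemma dotBr u v w : dot w (u - v) = dot w u - dot w v.
Proof. by rewrite dotC dotBl !(dotC w). Qed.

Lemma dotNr u w : dot w (- u) = - dot w u.
Proof. by rewrite dotC dotNl dotC. Qed.

Lemma dot0l w : dot 0 w = 0.
Proof. by rewrite -(scale0r 0) dotZl mul0r. Qed.

Lemma dot_ge0 u : 0 <= dot u u.
Proof. by rewrite dotE; apply: sumr_ge0 => j _; rewrite -expr2 sqr_ge0. Qed.

Lemma dot_eq0 u : dot u u = 0 -> u = 0.
Proof.
rewrite dotE => /eqP; rewrite psumr_eq0 => [/allP u0|j _]; last first.
  by rewrite -expr2 sqr_ge0.
apply/rowP => j; rewrite mxE; apply/eqP.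
by rewrite -sqrf_eq0 expr2 (eqP (u0 j (mem_index_enum j))).
Qed.

Lemma dot_young (e : R) u v : 0 < e -> 2 * dot u v <= e * dot u u + e^-1 * dot v v.
Proof.
move=> e_gt0; have := dot_ge0 (e *: u - v).
rewrite !(dotBl, dotBr, dotZl, dotZr) (dotC v u) => sq_ge0.
rewrite -(ler_pM2l e_gt0) mulrDr [e * (e^-1 * _)]mulrA mulfV ?gt_eqF // mul1r.
lra.
Qed.

Lemma bdf2_identity u0 u1 u2 :
  2 * dot (3%:R *: u2 - 4%:R *: u1 + u0) u2
  = dot u2 u2 + dot (2%:R *: u2 - u1) (2%:R *: u2 - u1)
    - (dot u1 u1 + dot (2%:R *: u1 - u0) (2%:R *: u1 - u0))
    + dot (u2 - 2%:R *: u1 + u0) (u2 - 2%:R *: u1 + u0).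
Proof.
rewrite !dotE mulr_sumr opprD addrA -!(big_split, sumrB) /=; apply: eq_bigr => j _.
rewrite !mxE; ring.
Qed.

Lemma coercive_unitmx (P : 'M[R]_n) (a : R) :
  0 < a -> (forall v, a * dot v v <= dot (v *m P) v) -> P \in unitmx.
Proof.
move=> a_gt0 P_coer; rewrite -row_free_unit; apply: inj_row_free => v vP0.
apply/dot_eq0/le_anti; rewrite dot_ge0 andbT -(pmulr_rle0 _ a_gt0).
by have := P_coer v; rewrite vP0 dot0l.
Qed.

End InnerProduct.

Section MaxNorm.
Context {R : realType}.

Lemma mxentry_le_norm {m n} (B : 'M[R]_(m, n)) i j : `|B i j| <= `|B|.
Proof.
by rewrite [leRHS]/Num.Def.normr /= mx_normrE; apply/bigmax_geP; right; exists (i, j).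
Qed.

Lemma rV_norm_le {n} (u : 'rV[R]_n) c : 0 <= c -> (forall j, `|u 0 j| <= c) -> `|u| <= c.
Proof.
move=> c_ge0 uc; rewrite /Num.Def.normr /= mx_normrE.
by apply: bigmax_le => // -[i j] _ /=; rewrite (ord1 i).
Qed.

Lemma sum_le_card {n} (f : 'I_n -> R) c : (forall j, f j <= c) -> \sum_j f j <= n%:R * c.
Proof.
move=> fc; apply: le_trans (ler_sum _ (fun j _ => fc j)) _.
by rewrite sumr_const card_ord mulr_natl.
Qed.

Lemma norm_le_hnorm {n} (u : 'rV[R]_n) : `|u| <= hnorm u.
Proof.
apply: rV_norm_le => [|j]; first exact: sqrtr_ge0.
rewrite -sqrtr_sqr; apply: ler_wsqrtr.
by rewrite dotE (bigD1 j) //= -expr2 lerDl sumr_ge0 // => i _; rewrite -expr2 sqr_ge0.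
Qed.

Lemma dot_le_norm {n} (u : 'rV[R]_n) : dot u u <= n%:R * `|u| ^+ 2.
Proof.
rewrite dotE; apply: sum_le_card => j.
by rewrite -expr2 -real_normK ?num_real // lerXn2r ?nnegrE ?mxentry_le_norm.
Qed.

Lemma hnorm_le_norm {n} (u : 'rV[R]_n) : hnorm u <= Num.sqrt n%:R * `|u|.
Proof.
rewrite /hnorm -(ger0_norm (normr_ge0 u)) -sqrtr_sqr -sqrtrM ?ler0n //.
exact/ler_wsqrtr/dot_le_norm.
Qed.

Lemma norm_dot_le {n} (u v : 'rV[R]_n) : `|dot u v| <= n%:R * (`|u| * `|v|).
Proof.
rewrite dotE; apply: le_trans (ler_norm_sum _ _ _) _; apply: sum_le_card => j.
by rewrite normrM ler_pM ?mxentry_le_norm.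
Qed.

Lemma norm_mulmx_le {n} (u : 'rV[R]_n) (B : 'M[R]_n) : `|u *m B| <= n%:R * (`|u| * `|B|).
Proof.
apply: rV_norm_le => [|j]; first by rewrite !mulr_ge0.
rewrite mxE; apply: le_trans (ler_norm_sum _ _ _) _; apply: sum_le_card => i.
by rewrite normrM ler_pM ?mxentry_le_norm.
Qed.

End MaxNorm.

Definition energy {R : realType} {n : nat} (x : state R n) : R :=
  dot x.1.2 x.1.2 + dot (2%:R *: x.1.2 - x.1.1) (2%:R *: x.1.2 - x.1.1)
  + x.2.2 ^+ 2 + (2 * x.2.2 - x.2.1) ^+ 2.

Definition sqnorm_last {R : realType} {n : nat} (x : state R n) : R :=
  dot x.1.2 x.1.2 + x.2.2 ^+ 2.

Definition lyapunov {R : realType} {n : nat} (k mu : R) (x : state R n) : R :=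
  energy x + k * mu * sqnorm_last x.

Lemma energy_le {R : realType} {n : nat} (x : state R n) :
  energy x <= 9 * sqnorm_last x + 2 * (dot x.1.1 x.1.1 + x.2.1 ^+ 2).
Proof.
have := dot_ge0 (2%:R *: x.1.2 + x.1.1); have := sqr_ge0 (2 * x.2.2 + x.2.1).
rewrite /energy /sqnorm_last !(dotDl, dotNl, dotZl, dotDr, dotNr, dotZr).
rewrite (dotC x.1.1 x.1.2); lra.
Qed.

Lemma lyapunov_step_real (R : realFieldType) (k mu K E0 E1 p0 p1 : R) :
  0 < k <= 1 -> 0 < mu -> 0 <= p0 -> 0 <= p1 ->
  E1 <= 9 * p1 + 2 * p0 -> E1 + 2 * k * mu * p1 <= E0 + k * K ->
  (E1 + k * mu * p1) * (1 + k * (mu / (9 + mu))) <= E0 + k * mu * p0 + k * K.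
Proof.
move=> /andP[k_gt0 k_le1] mu_gt0 p0_ge0 p1_ge0 E1_le dissip.
set th := mu / (9 + mu).
have th_ge0 : 0 <= th by rewrite divr_ge0 // ltW // addr_gt0.
have th_mu : th * (9 + mu) = mu by rewrite mulfVK // gt_eqF // addr_gt0.
have kmu_le : k * (mu * p1) <= mu * p1 by rewrite ler_piMl ?mulr_ge0 // ltW.
have V1_le : E1 + k * mu * p1 <= (9 + mu) * (p1 + p0) by nra.
have := ler_wpM2l (mulr_ge0 (ltW k_gt0) th_ge0) V1_le.
have -> : k * th * ((9 + mu) * (p1 + p0)) = k * mu * (p1 + p0).
  by rewrite -[in RHS]th_mu; ring.
nra.
Qed.

Lemma compact_norm_bounded {K : realType} {V : normedModType K} {X : set V} :
  compact X -> exists M, forall x, X x -> `|x| <= M.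
Proof.
move=> /compact_bounded [M [M_real M_bound]].
by exists (`|M| + 1) => x Xx; apply: M_bound => //; rewrite ltr_pwDr // real_ler_norm.
Qed.

Lemma state_norm_le {R : realType} {n : nat} (x : state R n) :
  [/\ `|x.1.1| <= `|x|, `|x.1.2| <= `|x|, `|x.2.1| <= `|x| & `|x.2.2| <= `|x|].
Proof.
have -> : `|x| = Num.max (Num.max `|x.1.1| `|x.1.2|) (Num.max `|x.2.1| `|x.2.2|) by [].
by split; rewrite !le_max lexx ?orbT.
Qed.

Lemma lyapunov_le_norm {R : realType} {n : nat} (k mu : R) (x : state R n) :
  0 <= k <= 1 -> 0 <= mu ->
  lyapunov k mu x <= (10 * n%:R + 10 + mu * (n%:R + 1)) * `|x| ^+ 2.
Proof.
move=> /andP[k_ge0 k_le1] mu_ge0.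
have [u0_le u1_le q0_le q1_le] := state_norm_le x; set r := `|x| in u0_le u1_le q0_le q1_le *.
have sqrR (t c : R) : `|t| <= c -> t ^+ 2 <= c ^+ 2.
  by move=> tc; rewrite -real_normK ?num_real // lerXn2r ?nnegrE // (le_trans _ tc).
have sqrV (u : 'rV[R]_n) c : `|u| <= c -> dot u u <= n%:R * c ^+ 2.
  move=> uc; apply: le_trans (dot_le_norm u) _.
  by rewrite ler_wpM2l // lerXn2r ?nnegrE // (le_trans _ uc).
have w_le : `|2%:R *: x.1.2 - x.1.1| <= 3 * r.
  by apply: le_trans (ler_normB _ _) _; rewrite normrZ ger0_norm //; lra.
have p_le : `|2 * x.2.2 - x.2.1| <= 3 * r.
  by apply: le_trans (ler_normB _ _) _; rewrite normrM ger0_norm //; lra.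
have last_le : sqnorm_last x <= (n%:R + 1) * r ^+ 2.
  by rewrite mulrDl mul1r lerD ?sqrV ?sqrR.
have kmu_le : k * mu * sqnorm_last x <= mu * ((n%:R + 1) * r ^+ 2).
  rewrite -mulrA; apply: le_trans (ler_wpM2l mu_ge0 last_le).
  by rewrite ler_piMl // mulr_ge0 // addr_ge0 ?dot_ge0 ?sqr_ge0.
have := sqrV _ _ u1_le; have := sqrV _ _ w_le; have := sqrR _ _ q1_le; have := sqrR _ _ p_le.
rewrite /lyapunov /energy; nra.
Qed.

Lemma lyapunov_controls {R : realType} {n : nat} {k mu W : R} {x : state R n} :
  0 <= k -> 0 <= mu -> lyapunov k mu x <= W ->
  [/\ `|x.1.2| <= Num.sqrt W, `|x.2.2| <= Num.sqrt W
    & hnorm (2%:R *: x.1.2 - x.1.1) <= Num.sqrt W].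
Proof.
move=> k_ge0 mu_ge0; rewrite /lyapunov /energy => le_W.
have := dot_ge0 x.1.2; have := dot_ge0 (2%:R *: x.1.2 - x.1.1).
have := sqr_ge0 x.2.2; have := sqr_ge0 (2 * x.2.2 - x.2.1).
have : 0 <= k * mu * sqnorm_last x by rewrite !mulr_ge0 // addr_ge0 ?dot_ge0 ?sqr_ge0.
move=> ? ? ? ? ?; split.
- by apply: le_trans (norm_le_hnorm _) _; apply: ler_wsqrtr; lra.
- by rewrite -sqrtr_sqr; apply: ler_wsqrtr; lra.
- by apply: ler_wsqrtr; lra.
Qed.

Lemma locally_lipschitz_bounded {R : realType} {n : nat} {N : 'rV[R]_n -> 'rV[R]_n} {r : R} :
  locally_lipschitz N -> 0 <= r -> exists M, forall w, hnorm w <= r -> `|N w| <= M.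
Proof.
move=> N_lip r_ge0; have [L N_L] := N_lip r.
exists (`|L| * r + `|N 0|) => w w_le.
have hnorm0 : hnorm (0 : 'rV[R]_n) <= r by rewrite /hnorm dot0l sqrtr0.
rewrite -[N w](subrK (N 0)); apply: le_trans (ler_normD _ _) _; rewrite lerD2r.
apply: le_trans (norm_le_hnorm _) _; apply: le_trans (N_L _ _ w_le hnorm0) _.
rewrite subr0; apply: le_trans (ler_wpM2r (sqrtr_ge0 _) (ler_norm L)) _.
by rewrite ler_wpM2l.
Qed.

Definition increment {R : realType} {n : nat} (x : state R n) : R :=
  `|x.1.2 - x.1.1| + `|x.2.2 - x.2.1|.

Section Scheme.
Context {R : realType} {n : nat} {A : 'M[R]_n} {l0 : R}.
Context {N : 'rV[R]_n -> 'rV[R]_n} {F : 'rV[R]_n} {gamma : R}.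
Hypotheses (l0_gt0 : 0 < l0) (gamma_gt0 : 0 < gamma).
Hypothesis A_coercive : forall u, l0 * dot u u <= dot u (app A u).
Hypothesis N_lip : locally_lipschitz N.

Local Notation bdf2_eq := (scheme_eq A N F gamma).
Local Notation S := (Sk A N F gamma).

Lemma scheme_solvable (k : R) u0 u1 q0 q1 :
  0 < k -> exists p : 'rV[R]_n * R, bdf2_eq k u0 u1 q0 q1 p.1 p.2.
Proof.
move=> k_gt0; set Nw := N (2%:R *: u1 - u0).
set a := 3%:R / (2%:R * k); set c := a + gamma.
set beta := gamma + (4%:R * q1 - q0) / (2%:R * k).
have a_gt0 : 0 < a by rewrite divr_gt0 ?mulr_gt0.
have c_gt0 : 0 < c by rewrite addr_gt0.
set P : 'M[R]_n := a%:M + A^T + c^-1 *: (Nw^T *m Nw).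
have mulP v : v *m P = a *: v + app A v + (c^-1 * dot v Nw) *: Nw.
  rewrite !mulmxDr mul_mx_scalar -scalemxAr mulmxA.
  by rewrite [v *m Nw^T]mx11_scalar mul_scalar_mx scalerA.
have P_unit : P \in unitmx.
  apply: (@coercive_unitmx R n P a a_gt0) => v; rewrite mulP !dotDl !dotZl -addrA lerDl.
  rewrite (dotC (app A v)) (dotC Nw) -mulrA -expr2 addr_ge0 //.
    by apply: le_trans (A_coercive v); rewrite mulr_ge0 ?dot_ge0 ?ltW.
  by rewrite mulr_ge0 ?sqr_ge0 // invr_ge0 ltW.
set b := F + (2%:R * k)^-1 *: (4%:R *: u1 - u0) - (beta / c) *: Nw.
set u2 := b *m invmx P; have : u2 *m P = b by rewrite mulmxKV.
rewrite mulP => u2P; exists (u2, (beta + dot Nw u2) / c); split => /=.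
- apply/rowP => j; move/rowP/(_ j): u2P; rewrite !mxE (dotC u2) /a.
  set Au2 := (\sum_i _); lra.
- by rewrite /c /a /beta; field; rewrite !gt_eqF ?addr_gt0 ?mulr_gt0.
Qed.

Lemma Sk_scheme_eq (k : R) (x : state R n) : 0 < k ->
  bdf2_eq k x.1.1 x.1.2 x.2.1 x.2.2 (S k x).1.2 (S k x).2.2.
Proof.
move=> k_gt0; have [p p_sol] := scheme_solvable k x.1.1 x.1.2 x.2.1 x.2.2 k_gt0.
exact: (epsilon_spec _ (fun p => bdf2_eq k _ _ _ _ p.1 p.2) (ex_intro _ p p_sol)).
Qed.

Lemma scheme_energy_dissipation {k : R} {u0 u1 q0 q1 u2 q2} : 0 < k ->
  bdf2_eq k u0 u1 q0 q1 u2 q2 ->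
  energy ((u1, u2), (q1, q2)) + 2 * k * (l0 * dot u2 u2 + gamma * q2 ^+ 2)
  <= energy ((u0, u1), (q0, q1)) + k * (2 * dot F F / l0 + 2 * gamma).
Proof.
move=> k_gt0 [eq_u eq_q]; set Nw := N _ in eq_u eq_q.
have k_neq0 : k != 0 by rewrite gt_eqF.
have := congr1 (dot^~ u2) eq_u; rewrite /= !dotDl !dotZl => eq_u_dot_u2.
have bdf2_term_u : dot (3%:R *: u2 - 4%:R *: u1 + u0) u2
    = 2 * k * (dot F u2 - dot (app A u2) u2 - q2 * dot Nw u2).
  by rewrite -eq_u_dot_u2; field.
have bdf2_term_q : 3 * q2 - 4 * q1 + q0 = 2 * k * (gamma - gamma * q2 + dot Nw u2).
  have -> : dot Nw u2 = (3 * q2 - 4 * q1 + q0) / (2 * k) + gamma * q2 - gamma by lra.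
  by field.
have bdf2_u := bdf2_identity u0 u1 u2; rewrite bdf2_term_u in bdf2_u.
have bdf2_q : 2 * ((3 * q2 - 4 * q1 + q0) * q2)
    = q2 ^+ 2 + (2 * q2 - q1) ^+ 2 - (q1 ^+ 2 + (2 * q1 - q0) ^+ 2)
      + (q2 - 2 * q1 + q0) ^+ 2 by ring.
rewrite bdf2_term_q in bdf2_q.
have := dot_ge0 (u2 - 2%:R *: u1 + u0); have := sqr_ge0 (q2 - 2 * q1 + q0).
have coer := ler_wpM2l (ltW k_gt0) (A_coercive u2); rewrite dotC in coer.
have young_F := ler_wpM2l (ltW k_gt0) (dot_young _ u2 F l0_gt0).
have young_q : k * gamma * (2 * q2) <= k * gamma * (q2 ^+ 2 + 1).
  by apply: (ler_wpM2l (mulr_ge0 (ltW k_gt0) (ltW gamma_gt0))); have := sqr_ge0 (q2 - 1); lra.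
rewrite (dotC u2 F) in young_F; rewrite /energy /=; lra.
Qed.

Lemma lyapunov_dissipation (k mu : R) (x : state R n) :
  0 < k <= 1 -> 0 < mu -> mu <= l0 -> mu <= gamma ->
  lyapunov k mu (S k x) * (1 + k * (mu / (9 + mu)))
  <= lyapunov k mu x + k * (2 * dot F F / l0 + 2 * gamma).
Proof.
move=> /[dup] k_range /andP[k_gt0 _] mu_gt0 mu_l0 mu_gamma.
have sqnorm_ge0 (y : state R n) : 0 <= sqnorm_last y.
  by rewrite addr_ge0 ?dot_ge0 ?sqr_ge0.
apply: lyapunov_step_real; rewrite ?sqnorm_ge0 //; first exact: energy_le.
have mu_le : mu * sqnorm_last (S k x)
    <= l0 * dot (S k x).1.2 (S k x).1.2 + gamma * (S k x).2.2 ^+ 2.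
  by rewrite mulrDr lerD // ler_wpM2r ?dot_ge0 ?sqr_ge0.
have := ler_wpM2l (mulr_ge0 (ler0n _ 2) (ltW k_gt0)) mu_le.
have := scheme_energy_dissipation k_gt0 (Sk_scheme_eq k x k_gt0).
rewrite /energy /=; lra.
Qed.

Lemma scheme_increment {k : R} {u0 u1 q0 q1 u2 q2} : 0 < k ->
  bdf2_eq k u0 u1 q0 q1 u2 q2 ->
  3 * (`|u2 - u1| + `|q2 - q1|) <= `|u1 - u0| + `|q1 - q0|
    + 2 * k * (`|F - app A u2 - q2 *: N (2%:R *: u1 - u0)|
               + `|gamma - gamma * q2 + dot (N (2%:R *: u1 - u0)) u2|).
Proof.
move=> k_gt0 [eq_u eq_q]; set Nw := N _ in eq_u eq_q *.
have du_eq : 3%:R *: (u2 - u1) = u1 - u0 + (2 * k) *: (F - app A u2 - q2 *: Nw).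
  apply/rowP => j; move/rowP/(_ j): eq_u; rewrite !mxE => <-.
  by field; rewrite gt_eqF.
have dq_eq : 3 * (q2 - q1) = q1 - q0 + 2 * k * (gamma - gamma * q2 + dot Nw u2).
  have -> : dot Nw u2 = (3 * q2 - 4 * q1 + q0) / (2 * k) + gamma * q2 - gamma by lra.
  by field; rewrite gt_eqF.
have := ler_normD (u1 - u0) ((2 * k) *: (F - app A u2 - q2 *: Nw)).
have := ler_normD (q1 - q0) (2 * k * (gamma - gamma * q2 + dot Nw u2)).
rewrite -du_eq -dq_eq !normrZ ?normrM !normr_nat !(ger0_norm (ltW k_gt0)); lra.
Qed.

Lemma forcing_bounded {B : R} : 0 <= B -> exists G : R, 0 <= G /\
  forall (w u : 'rV[R]_n) (q : R), hnorm w <= B -> `|u| <= B -> `|q| <= B ->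
    `|F - app A u - q *: N w| + `|gamma - gamma * q + dot (N w) u| <= G.
Proof.
move=> B_ge0; have [M N_M] := locally_lipschitz_bounded N_lip B_ge0.
have M_ge0 : 0 <= M.
  by apply: le_trans (N_M 0 _); rewrite ?normr_ge0 // /hnorm dot0l sqrtr0.
exists (`|F| + n%:R * (B * `|A^T|) + B * M + (gamma + gamma * B + n%:R * (M * B))).
split=> [|w u q w_le u_le q_le].
  by do ![apply: addr_ge0 | apply: mulr_ge0 | exact: ltW | exact: normr_ge0 | exact: ler0n].
have NwM := N_M w w_le; apply: lerD.
- apply: le_trans (ler_normB _ _) _; apply: lerD; last first.
    by rewrite normrZ ler_pM.
  apply: le_trans (ler_normB _ _) _; rewrite lerD2l.
  by apply: le_trans (norm_mulmx_le _ _) _; rewrite ler_wpM2l ?ler_wpM2r.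
- apply: le_trans (ler_normD _ _) _; apply: lerD; last first.
    by apply: le_trans (norm_dot_le _ _) _; rewrite ler_wpM2l ?ler_pM.
  apply: le_trans (ler_normB _ _) _.
  by rewrite normrM (gtr0_norm gamma_gt0) lerD2l; apply: (ler_wpM2l (ltW gamma_gt0)).
Qed.

Lemma attractor_state_bounded : exists B : R, 0 <= B /\
  forall (k : R) (Att : set (state R n)), 0 < k <= 1 ->
    compact Att -> (S k @` Att = Att)%classic ->
  forall x, Att x ->
    [/\ `|x.1.2| <= B, `|x.2.2| <= B & hnorm (2%:R *: x.1.2 - x.1.1) <= B].
Proof.
set mu := Num.min l0 gamma; set th : R := mu / (9 + mu).
set K := 2 * dot F F / l0 + 2 * gamma.
have mu_gt0 : 0 < mu by rewrite lt_min l0_gt0.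
have th_gt0 : 0 < th by rewrite divr_gt0 // addr_gt0.
exists (Num.sqrt (K / th)); split=> [|k Att k_range Att_compact Att_inv x Attx].
  exact: sqrtr_ge0.
have /andP[k_gt0 k_le1] := k_range.
apply: (lyapunov_controls (ltW k_gt0) (ltW mu_gt0)); move: x Attx.
have -> : K / th = (k * K) / (k * th) by field; rewrite !gt_eqF.
apply: (invariant_dissipation_bound (S k)); first by rewrite mulr_gt0.
- have [M M_bound] := compact_norm_bounded Att_compact.
  exists ((10 * n%:R + 10 + mu * (n%:R + 1)) * M ^+ 2) => y Atty.
  have k_range' : 0 <= k <= 1 by rewrite ltW.
  apply: le_trans (lyapunov_le_norm _ _ y k_range' (ltW mu_gt0)) _.
  apply: ler_wpM2l; first by have := ler0n R n; nra.
  have M_ge0 : 0 <= M := le_trans (normr_ge0 y) (M_bound y Atty).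
  by rewrite lerXn2r ?nnegrE ?M_bound.
- by rewrite Att_inv.
- move=> y _; apply: lyapunov_dissipation => //; rewrite ?ge_min ?lexx ?orbT //.
Qed.

Lemma attractor_increment_bounded : exists G : R, 0 <= G /\
  forall (k : R) (Att : set (state R n)), 0 < k <= 1 ->
    compact Att -> (S k @` Att = Att)%classic ->
  forall x, Att x -> increment x <= k * G.
Proof.
have [B [B_ge0 Att_bounded]] := attractor_state_bounded.
have [G [G_ge0 forcing_le]] := forcing_bounded B_ge0.
exists G; split=> // k Att k_range Att_compact Att_inv.
have /andP[k_gt0 _] := k_range.
have -> : k * G = (2 * k * G) / 2 by field.
apply: (invariant_dissipation_bound (S k)) => //.
- have [M M_bound] := compact_norm_bounded Att_compact.
  exists (4 * M) => y Atty; have [? ? ? ?] := state_norm_le y.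
  have := ler_normB y.1.2 y.1.1; have := ler_normB y.2.2 y.2.1.
  have := M_bound y Atty; rewrite /increment; lra.
- by rewrite Att_inv.
- move=> y Atty.
  have S_Att : Att (S k y) by rewrite -Att_inv; exists y.
  have [_ _ w_le] := Att_bounded k Att k_range Att_compact Att_inv y Atty.
  have [u_le q_le _] := Att_bounded k Att k_range Att_compact Att_inv _ S_Att.
  have := scheme_increment k_gt0 (Sk_scheme_eq k y k_gt0).
  have := ler_wpM2l (mulr_ge0 (ler0n _ 2) (ltW k_gt0)) (forcing_le _ _ _ w_le u_le q_le).
  rewrite /increment /=; lra.
Qed.

End Scheme.

Theorem proposition4 (R : realType) (n : nat) (A : 'M[R]_n) (l0 : R)
  (N : 'rV[R]_n -> 'rV[R]_n) (F : 'rV[R]_n) (gamma : R)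
  (Att : R -> set (state R n)) :
  A^T = A ->
  0 < l0 ->
  (forall u : 'rV[R]_n, dot u (app A u) >= l0 * dot u u) ->
  locally_lipschitz N ->
  (forall u : 'rV[R]_n, dot (N u) u = 0) ->
  0 < gamma ->
  (forall k : R, 0 < k <= 1 -> global_attractor (Sk A N F gamma k) (Att k)) ->
  exists C : R, 0 < C /\
    forall k : R, 0 < k <= 1 ->
      forall x : state R n, Att k x ->
        hnorm (x.1.1 - x.1.2) + `|x.2.1 - x.2.2| <= C * k.
Proof.
move=> _ l0_gt0 A_coercive N_lip _ gamma_gt0 Att_attractor.
have [G [G_ge0 increment_le]] :=
  attractor_increment_bounded (F := F) l0_gt0 gamma_gt0 A_coercive N_lip.
have sqrtn_ge0 := sqrtr_ge0 (n%:R : R).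
exists ((Num.sqrt n%:R + 1) * G + 1); split; first by nra.
move=> k k_range x Attx; have /andP[k_gt0 _] := k_range.
have [Att_compact [Att_inv _]] := Att_attractor k k_range.
have := increment_le k (Att k) k_range Att_compact Att_inv x Attx.
rewrite /increment (distrC x.1.2) (distrC x.2.2) => incr_le.
have := ler_wpM2l sqrtn_ge0 incr_le.
have := hnorm_le_norm (x.1.1 - x.1.2).
have := mulr_ge0 sqrtn_ge0 (normr_ge0 (x.2.1 - x.2.2)).
have := normr_ge0 (x.1.1 - x.1.2); nra.
Qed.
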